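(* Let $1\le j\le k$ be integers, let $G$ and $H$ be $(j,k)$-bicliques with interesting factors $g(x)$ and $h(x)$, and suppose $g(x)=(-1)^j h(-x+c)$ for some integer $c$. Then $$P_G(c+1)=\binom{c+1}{k}(-1)^{j+k}P_H(-1).$$ In particular, if $G$ and $H$ are complementary $(j,k)$-bicliques, then the number of proper $(j+k)$-colourings of $G$ equals $\binom{j+k}{k}$ times the number of acyclic orientations of $H$.
   Context: All graphs are finite and simple. For integers $1\le j\le k$, a $(j,k)$-biclique is a graph whose vertex set is the disjoint union of a $j$-clique and a $k$-clique, with an arbitrary set of additional edges (bridging edges) each joining a vertex of the $j$-clique to a vertex of the $k$-clique. Two $(j,k)$-bicliques $G,H$ on the same two cliques are complementary if $H$ is obtained from $G$ by replacing every bridging edge by a non-edge and every non-adjacent pair (one vertex in each clique) by an edge. $P_G(x)$ is the chromatic polynomial; $(x)_n=x(x-1)\cdots(x-n+1)$; the interesting factor of a $(j,k)$-biclique $G$ is $P_G(x)/(x)_k$, a polynomial of degree $j$. An acyclic orientation of a graph is an assignment of a direction to each edge producing no directed cycle. (Stanley's theorem, which may be used: for an $n$-vertex graph $F$, $(-1)^nP_F(-1)$ is the number of acyclic orientations of $F$.) *)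

From HB Require Import structures.
From mathcomp Require Import all_boot all_order all_algebra.
Set Implicit Arguments. Unset Strict Implicit. Unset Printing Implicit Defensive.
Import Order.TTheory GRing.Theory Num.Theory.
Local Open Scope ring_scope.

Definition proper_colourings (V : finType) (e : rel V) (n : nat)
  : {set {ffun V -> 'I_n}} :=
  [set f : {ffun V -> 'I_n} | [forall x, forall y, e x y ==> (f x != f y)]].

Definition is_chromatic_poly (V : finType) (e : rel V) (P : {poly rat}) : Prop :=
  forall n : nat, P.[n%:R] = (#|proper_colourings e n|)%:R.

Definition dir_acyclic (V : finType) (o : {ffun V * V -> bool}) : bool :=
  [forall x, forall y, o (x, y) ==> ~~ connect (fun a b => o (a, b)) y x].

Definition acyclic_orientations (V : finType) (e : rel V) : {set {ffun V * V -> bool}} :=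
  [set o : {ffun V * V -> bool} | [forall x, forall y, (o (x, y) ==> e x y) && (e x y ==> (o (x, y) (+) o (y, x)))]
           && dir_acyclic o].

(* Vertex set: disjoint union of a j-clique ('I_j) and a k-clique ('I_k);
   b a c says that the bridging edge between vertex a of the j-clique and
   vertex c of the k-clique is present. *)
Definition biclique_vert (j k : nat) : finType := ('I_j + 'I_k)%type.

Definition biclique_adj (j k : nat) (b : 'I_j -> 'I_k -> bool)
  : rel (biclique_vert j k) :=
  fun u v =>
    match u, v with
    | inl a, inl a' => a != a'
    | inr c, inr c' => c != c'
    | inl a, inr c => b a c
    | inr c, inl a => b a c
    end.

Definition compl_bridges (j k : nat) (b : 'I_j -> 'I_k -> bool) : 'I_j -> 'I_k -> bool :=
  fun a c => ~~ b a c.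

Definition falling_poly (n : nat) : {poly rat} :=
  \prod_(i < n) ('X - (i%:R)%:P).

Definition binz (z : int) (k : nat) : rat :=
  (\prod_(i < k) (z%:~R - i%:R)) / (k`!)%:R.

From mathcomp Require Import all_boot all_order all_algebra fingroup perm zify.
Import GRing.Theory Num.Theory.
Set Implicit Arguments. Unset Strict Implicit. Unset Printing Implicit Defensive.

(* The first part is evaluation: (x)_k is (-1)^k k! at -1, and the relation
   between g and h turns g(c + 1) into (-1)^j h(-1).

   The second part is a double bijection.  A proper (j+k)-colouring of G is
   determined by the k-set S of colours used on the k-clique C together with
   the "standard" colouring obtained by moving S onto {0, ..., k-1} with a
   permutation of the palette; this gives the factor binom(j+k, k).
   Standard colourings of G correspond to acyclic orientations of H.  An
   acyclic orientation of H linearly orders both cliques (ranks rankA, rankC);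
   the bridges directed from C to A that are maximal for "higher in A, lower
   in C" form a matching.  Colour c by rankC c, a vertex a matched to c by
   rankC c, and an unmatched a by k + rankA a.  Conversely, a standard
   colouring f orders C by colour and A by putting an unmatched a in slot
   f a - k and the matched vertices in the remaining slots by increasing
   colour; a bridge c a of H is directed towards a exactly when some matched
   vertex placed no later than a has colour at least f c. *)

Section InjectionIntoInitialSegment.

Variables (T : finType) (S : {set T}) (g : T -> nat).
Hypotheses (g_inj : {in S &, injective g}) (g_lt : {in S, forall x, g x < #|S|}).

Lemma perm_inj_iota : perm_eq [seq g x | x in S] (iota 0 #|S|).
Proof.
have uniq_g : uniq [seq g x | x in S].
  by rewrite map_inj_in_uniq ?enum_uniq // => x y; rewrite !mem_enum; apply: g_inj.
have sub_iota : {subset [seq g x | x in S] <= iota 0 #|S|}.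
  by move=> _ /mapP[x xS ->]; rewrite mem_iota g_lt // -mem_enum.
have size_g : size (iota 0 #|S|) <= size [seq g x | x in S].
  by rewrite size_map size_iota cardE.
have [_ eq_g] := uniq_min_size uniq_g sub_iota size_g.
by apply: uniq_perm; rewrite ?iota_uniq.
Qed.

Lemma inj_iota_onto i : i < #|S| -> exists2 x, x \in S & g x = i.
Proof.
move=> lt_i; have : i \in iota 0 #|S| by rewrite mem_iota.
rewrite -(perm_mem perm_inj_iota) => /mapP[x].
by rewrite mem_enum => xS ->; exists x.
Qed.

Lemma card_inj_iota_lt x : x \in S -> #|[set y in S | g y < g x]| = g x.
Proof.
move=> xS; have gxS : g x <= #|S| by rewrite ltnW ?g_lt.
have -> : #|[set y in S | g y < g x]| = count (fun y => g y < g x) (enum S).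
  by rewrite -sum1_count big_enum_cond -sum1_card; apply: eq_bigl => y; rewrite inE.
rewrite -(count_map g (fun n => n < g x)) (seq.permP perm_inj_iota) -size_filter.
by rewrite (filter_iota_ltn 0 gxS) size_iota.
Qed.

End InjectionIntoInitialSegment.

Lemma card_set_count (T : finType) (P : pred T) : #|[set x | P x]| = count P (enum T).
Proof. by rewrite cardsE cardE enumT /enum_mem unlock /= size_filter. Qed.

Lemma card_ord_lt n k : k <= n -> #|[set i : 'I_n | i < k]| = k.
Proof.
move=> le_kn; rewrite card_set_count -(count_map val (fun i => i < k)) val_enum_ord.
by rewrite -size_filter (filter_iota_ltn 0 le_kn) size_iota.
Qed.

Lemma exists_perm_imset n (S T : {set 'I_n}) :
  #|S| = #|T| -> exists p : {perm 'I_n}, p @: S = T.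
Proof.
move=> eqST; pose mem_seq (X : {set 'I_n}) := [seq i \in X | i <- enum 'I_n].
have count_mem_seq X (a : pred bool) : count a (mem_seq X) = #|[set i | a (i \in X)]|.
  by rewrite count_map card_set_count.
have set_pred (X : {set 'I_n}) (a : pred bool) : [set i | a (i \in X)] =
    if a true then (if a false then setT else X) else (if a false then ~: X else set0).
  by case Ht: (a true); case Hf: (a false); apply/setP => i; rewrite !inE;
    case: (i \in X); rewrite ?Ht ?Hf.
have eqCST : #|~: S| = #|~: T| by apply/eqP; rewrite -(eqn_add2l #|S|) cardsC eqST cardsC.
have tupleT : [tuple i \in T | i < n] = mem_seq T :> seq bool by [].
have /tuple_permP[p] : perm_eq (mem_seq S) [tuple i \in T | i < n].
  apply/seq.permP => a; rewrite tupleT !count_mem_seq !set_pred.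
  by case: (a true); case: (a false); rewrite ?eqST ?eqCST.
move=> /eq_in_map memS.
exists p; apply/setP => i; rewrite -[i](permKV p) mem_imset; last exact: perm_inj.
by rewrite memS ?mem_enum //= tnth_mktuple.
Qed.

Definition strict_total (T : finType) (r : rel T) : Prop :=
  [/\ irreflexive r, forall x y, x != y -> r x y || r y x & transitive r].

Section OrderRank.

Variables (T : finType) (r : rel T).
Hypothesis r_total : strict_total r.

Definition order_rank (x : T) : nat := #|[set z | r z x]|.

Lemma order_rank_lt_card x : order_rank x < #|T|.
Proof.
case: r_total => irr _ _; rewrite -cardsT; apply: proper_card; apply/properP.
by split; [exact: subsetT | exists x; rewrite ?inE ?irr].
Qed.

Lemma order_rank_ltE x y : r x y = (order_rank x < order_rank y).
Proof.
case: r_total => irr tot tr.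
have rank_lt u v : r u v -> order_rank u < order_rank v.
  move=> ruv; apply: proper_card; apply/properP; split; last by exists u; rewrite !inE ?irr.
  by apply/subsetP => z; rewrite !inE => rzu; apply: tr rzu ruv.
apply/idP/idP => [/rank_lt // | lt_xy].
have [exy | /tot/orP[// | ryx]] := eqVneq x y; first by rewrite exy ltnn in lt_xy.
by have := rank_lt _ _ ryx; rewrite ltnNge ltnW.
Qed.

Lemma order_rank_inj : injective order_rank.
Proof.
case: r_total => _ tot _ x y eq_xy; apply/eqP/negPn/negP => /tot.
by rewrite !order_rank_ltE eq_xy ltnn.
Qed.

Lemma order_rank_leqE x y : (order_rank x <= order_rank y) = (x == y) || r x y.
Proof.
rewrite leq_eqVlt -order_rank_ltE; congr (_ || _).
by apply/eqP/eqP => [/order_rank_inj | ->].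
Qed.

End OrderRank.

Section SetRank.

Variables (n : nat) (S : {set 'I_n}).

Definition set_rank (x : 'I_n) : nat := #|[set y in S | y < x]|.

Lemma set_rank_mono (x y : 'I_n) : x <= y -> set_rank x <= set_rank y.
Proof.
move=> le_xy; apply: subset_leq_card; apply/subsetP => z.
by rewrite !inE => /andP[-> lt_zx]; apply: leq_trans lt_zx le_xy.
Qed.

Lemma set_rank_ltn (x y : 'I_n) : x \in S -> x < y -> set_rank x < set_rank y.
Proof.
move=> xS lt_xy; apply: proper_card; apply/properP; split.
  by apply/subsetP => z; rewrite !inE => /andP[-> lt_zx]; apply: ltn_trans lt_zx lt_xy.
by exists x; rewrite !inE ?xS ?lt_xy ?ltnn.
Qed.

Lemma set_rank_lt_card x : x \in S -> set_rank x < #|S|.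
Proof.
move=> xS; apply: proper_card; apply/properP; split.
  by apply/subsetP => z; rewrite inE => /andP[].
by exists x; rewrite // inE ltnn andbF.
Qed.

Lemma set_rank_inj : {in S &, injective set_rank}.
Proof.
move=> x y xS yS eq_xy; apply: val_inj; apply/eqP.
case: ltngtP => // [/(set_rank_ltn xS) | /(set_rank_ltn yS)]; by rewrite eq_xy ltnn.
Qed.

End SetRank.

Lemma connect_potential (T : finType) (e : rel T) (R : T -> nat) :
  (forall x y, e x y -> R x < R y) -> forall x y, connect e x y -> R x <= R y.
Proof.
move=> R_lt x y /connectP[p p_path ->] {y}; elim: p x p_path => //= z p IHp x.
by case/andP => /R_lt lt_xz /IHp; apply: leq_trans (ltnW lt_xz).
Qed.

Lemma ltn_bigmax_exists (I : finType) (P : pred I) (F : I -> nat) m :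
  (m < \max_(i | P i) F i) = [exists i, P i && (m < F i)].
Proof.
apply/idP/idP => [lt_m | /existsP[i /andP[Pi lt_m]]]; last first.
  by apply: leq_trans lt_m (leq_bigmax_cond _ Pi).
apply: contraLR lt_m; rewrite negb_exists -leqNgt => /forallP le_m.
by apply/bigmax_leqP => i Pi; move: (le_m i); rewrite Pi /= -leqNgt.
Qed.

Section AcyclicOrientation.

Variables (V : finType) (e : rel V) (o : {ffun V * V -> bool}).
Hypothesis o_acyclic : o \in acyclic_orientations e.

Lemma ao_edge x y : o (x, y) -> e x y.
Proof.
by case/setIdP: o_acyclic => /forallP/(_ x)/forallP/(_ y)/andP[/implyP].
Qed.

Lemma ao_edge_xor x y : e x y -> o (x, y) (+) o (y, x).
Proof.
by case/setIdP: o_acyclic => /forallP/(_ x)/forallP/(_ y)/andP[_ /implyP].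
Qed.

Lemma ao_no_cycle x y : o (x, y) -> ~~ connect (fun a b => o (a, b)) y x.
Proof. by case/setIdP: o_acyclic => _ /forallP/(_ x)/forallP/(_ y)/implyP. Qed.

Lemma ao_trans x y z : o (x, y) -> o (y, z) -> e x z -> o (x, z).
Proof.
move=> oxy oyz /ao_edge_xor; case ozx: (o (z, x)); rewrite ?addbT ?addbF // => _.
have arc := connect1 (e := fun a b => o (a, b)).
by have := ao_no_cycle oxy; rewrite (connect_trans (arc _ _ oyz) (arc _ _ ozx)).
Qed.

Lemma ao_clique_strict_total (T : finType) (phi : T -> V) :
  (forall x y, e (phi x) (phi y) = (x != y)) -> strict_total (fun x y => o (phi x, phi y)).
Proof.
move=> e_phi; split.
- by move=> x; apply/negP => /ao_edge; rewrite e_phi eqxx.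
- by move=> x y; rewrite -e_phi => /ao_edge_xor; case: (o _); case: (o _).
- move=> y x z oxy oyz; have [exz | nxz] := eqVneq x z; last first.
    by apply: ao_trans oxy oyz _; rewrite e_phi.
  move: (ao_no_cycle oxy); rewrite -exz in oyz *.
  by rewrite (connect1 (e := fun a b => o (a, b)) oyz).
Qed.

End AcyclicOrientation.

Lemma proper_colouringP (V : finType) (e : rel V) n (f : {ffun V -> 'I_n}) :
  reflect (forall x y, e x y -> f x != f y) (f \in proper_colourings e n).
Proof.
rewrite inE; apply: (iffP forallP) => [f_ok x y | f_ok x].
  by move/forallP/(_ y)/implyP: (f_ok x); apply.
by apply/forallP => y; apply/implyP; apply: f_ok.
Qed.

Lemma potential_ao (V : finType) (e : rel V) (o : {ffun V * V -> bool}) (R : V -> nat) :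
  (forall x y, o (x, y) -> e x y) -> (forall x y, e x y -> o (x, y) (+) o (y, x)) ->
  (forall x y, o (x, y) -> R x < R y) -> o \in acyclic_orientations e.
Proof.
move=> o_e e_o R_lt; rewrite inE; apply/andP; split.
  apply/forallP => x; apply/forallP => y.
  by apply/andP; split; apply/implyP; [apply: o_e | apply: e_o].
apply/forallP => x; apply/forallP => y; apply/implyP => oxy.
apply/negP => /(connect_potential R_lt); rewrite leqNgt.
by rewrite R_lt.
Qed.

Section ColouringsByImage.

Variables (V : finType) (e : rel V) (n : nat) (W : {set V}).

Lemma perm_proper_colouring (p : {perm 'I_n}) (f : {ffun V -> 'I_n}) :
  ([ffun x => p (f x)] \in proper_colourings e n) = (f \in proper_colourings e n).
Proof.
rewrite !inE; apply: eq_forallb => x; apply: eq_forallb => y.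
by rewrite !ffunE (inj_eq perm_inj).
Qed.

Lemma card_colourings_image_eq (S T : {set 'I_n}) : #|S| = #|T| ->
  #|[set f in proper_colourings e n | f @: W == S]| =
  #|[set f in proper_colourings e n | f @: W == T]|.
Proof.
case/exists_perm_imset => p pST.
pose pf (f : {ffun V -> 'I_n}) := [ffun x => p (f x)].
have pf_inj : injective pf.
  by move=> f g /ffunP eq_fg; apply/ffunP => x; have := eq_fg x; rewrite !ffunE => /perm_inj.
have pf_im f : pf f @: W = p @: (f @: W).
  by rewrite -imset_comp; apply: eq_imset => x; rewrite /pf ffunE.
rewrite -(card_imset _ pf_inj); apply: eq_card => g; rewrite inE.
apply/imsetP/andP => [[f] | [col_g /eqP imT]].
  rewrite inE => /andP[col_f /eqP imS] ->.
  by rewrite perm_proper_colouring col_f pf_im imS pST.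
have gE : g = pf [ffun x => p^-1%g (g x)] by apply/ffunP => x; rewrite !ffunE permKV.
exists [ffun x => p^-1%g (g x)] => //.
rewrite inE -(perm_proper_colouring p) -/(pf _) -gE col_g /=.
by rewrite -(inj_eq (imset_inj (@perm_inj _ p))) -pf_im -gE imT pST.
Qed.

Lemma card_colourings_by_image k : k <= n ->
  {in proper_colourings e n, forall f : {ffun V -> 'I_n}, #|f @: W| = k} ->
  #|proper_colourings e n| =
    'C(n, k) * #|[set f in proper_colourings e n | f @: W == [set i : 'I_n | i < k]]|.
Proof.
move=> le_kn card_im; set T0 := [set i : 'I_n | i < k].
have card_T0 : #|T0| = k by exact: card_ord_lt.
rewrite -[#|proper_colourings e n|]sum1_card.
rewrite (partition_big (fun f : {ffun V -> 'I_n} => f @: W) (fun S => #|S| == k)).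
  2: by move=> f /card_im ->.
have -> : 'C(n, k) = #|[set S : {set 'I_n} | #|S| == k]| by rewrite card_draws card_ord.
rewrite -sum1_card big_distrl /=.
apply: eq_big => [S | S /eqP card_S]; first by rewrite inE.
rewrite mul1n -(card_colourings_image_eq (etrans card_S (esym card_T0))).
by rewrite -sum1_card; apply: eq_bigl => f; rewrite inE.
Qed.

End ColouringsByImage.

Section BicliqueOrientation.

Variables (j k : nat) (bG : 'I_j -> 'I_k -> bool).
Variable o : {ffun biclique_vert j k * biclique_vert j k -> bool}.
Hypothesis o_ao : o \in acyclic_orientations (biclique_adj (compl_bridges bG)).

Local Notation arc := (fun x y => o (x, y)).

Definition rankA (a : 'I_j) : nat := order_rank (fun a a' => o (inl a, inl a')) a.
Definition rankC (c : 'I_k) : nat := order_rank (fun c c' => o (inr c, inr c')) c.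

Lemma orderA_total : strict_total (fun a a' : 'I_j => o (inl a, inl a')).
Proof. exact: (ao_clique_strict_total o_ao). Qed.

Lemma orderC_total : strict_total (fun c c' : 'I_k => o (inr c, inr c')).
Proof. exact: (ao_clique_strict_total o_ao). Qed.

Lemma rankA_ltE a a' : o (inl a, inl a') = (rankA a < rankA a').
Proof. exact: order_rank_ltE orderA_total a a'. Qed.

Lemma rankC_ltE c c' : o (inr c, inr c') = (rankC c < rankC c').
Proof. exact: order_rank_ltE orderC_total c c'. Qed.

Lemma rankA_inj : injective rankA.
Proof. exact: order_rank_inj orderA_total. Qed.

Lemma rankC_inj : injective rankC.
Proof. exact: order_rank_inj orderC_total. Qed.

Lemma rankA_lt a : rankA a < j.
Proof. by have := order_rank_lt_card orderA_total a; rewrite card_ord. Qed.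

Lemma rankC_lt c : rankC c < k.
Proof. by have := order_rank_lt_card orderC_total c; rewrite card_ord. Qed.

Lemma rankA_onto i : i < j -> exists a, rankA a = i.
Proof.
move=> lt_i; have [a _ <-] : exists2 a, a \in [set: 'I_j] & rankA a = i.
  apply: inj_iota_onto; rewrite ?cardsT ?card_ord //.
  - by move=> a a' _ _ /rankA_inj.
  - by move=> a _; rewrite rankA_lt.
by exists a.
Qed.

Lemma connect_rankA a a' : rankA a <= rankA a' -> connect arc (inl a) (inl a').
Proof.
rewrite /rankA (order_rank_leqE orderA_total) => /orP[/eqP-> // | o_aa'].
exact: connect1 o_aa'.
Qed.

Lemma connect_rankC c c' : rankC c <= rankC c' -> connect arc (inr c) (inr c').
Proof.
rewrite /rankC (order_rank_leqE orderC_total) => /orP[/eqP-> // | o_cc'].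
exact: connect1 o_cc'.
Qed.

(* Arcs from the k-clique to the j-clique that are maximal for the order
   "a higher in A, c lower in C"; they form a matching. *)
Definition top_arc (a : 'I_j) (c : 'I_k) : bool :=
  o (inr c, inl a) && [forall a', forall c',
    o (inr c', inl a') && (rankA a' <= rankA a) && (rankC c <= rankC c') ==>
      (a' == a) && (c' == c)].

Lemma top_arc_arc a c : top_arc a c -> o (inr c, inl a).
Proof. by case/andP. Qed.

Lemma top_arc_nonadj a c : top_arc a c -> ~~ bG a c.
Proof. by move/top_arc_arc/(ao_edge o_ao). Qed.

Lemma top_arc_max a c a' c' : top_arc a c -> o (inr c', inl a') ->
  rankA a' <= rankA a -> rankC c <= rankC c' -> a' = a /\ c' = c.
Proof.
case/andP => _ /forallP/(_ a')/forallP/(_ c') top_ac oca le_a le_c.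
by move: top_ac; rewrite oca le_a le_c => /andP[/eqP-> /eqP->].
Qed.

Lemma top_arc_uniqC a c c' : top_arc a c -> top_arc a c' -> c = c'.
Proof.
move=> top_c top_c'; case: (leqP (rankC c) (rankC c')) => [le_cc' | /ltnW lt_c'c].
  by case: (top_arc_max top_c (top_arc_arc top_c') (leqnn _) le_cc').
by case: (top_arc_max top_c' (top_arc_arc top_c) (leqnn _) lt_c'c).
Qed.

Lemma top_arc_uniqA a a' c : top_arc a c -> top_arc a' c -> a = a'.
Proof.
move=> top_a top_a'; case: (leqP (rankA a') (rankA a)) => [le_a'a | /ltnW lt_aa'].
  by case: (top_arc_max top_a (top_arc_arc top_a') le_a'a (leqnn _)).
by case: (top_arc_max top_a' (top_arc_arc top_a) lt_aa' (leqnn _)).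
Qed.

Lemma top_arc_mono a c a' c' : top_arc a c -> top_arc a' c' ->
  rankA a < rankA a' -> rankC c < rankC c'.
Proof.
move=> top_ac top_a'c' lt_a; rewrite ltnNge; apply/negP => le_c.
have [eq_a _] := top_arc_max top_a'c' (top_arc_arc top_ac) (ltnW lt_a) le_c.
by rewrite eq_a ltnn in lt_a.
Qed.

Lemma top_arc_above a c : o (inr c, inl a) ->
  exists a', exists c', [/\ top_arc a' c', rankA a' <= rankA a & rankC c <= rankC c'].
Proof.
move=> oca.
pose P (p : 'I_j * 'I_k) :=
  o (inr p.2, inl p.1) && (rankA p.1 <= rankA a) && (rankC c <= rankC p.2).
have Pac : P (a, c) by rewrite /P /= oca !leqnn.
(* Maximise rankC c' - rankA a', shifted by j to stay in nat. *)
have [[a' c'] /andP[/andP[oc'a' le_a] le_c] /= max_ac] :=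
  arg_maxnP (fun p => rankC p.2 + (j - rankA p.1)) Pac.
exists a', c'; split => //; rewrite /top_arc oc'a'.
apply/forallP => a''; apply/forallP => c''; apply/implyP => /andP[/andP[oc''a'' le_a'] le_c'].
have := max_ac (a'', c''); rewrite /P /= oc''a'' (leq_trans le_a' le_a) (leq_trans le_c le_c').
move=> /(_ isT); have := rankA_lt a'; have := rankA_lt a'' => lt_a'' lt_a' le_F.
have eq_a : rankA a'' = rankA a' by lia.
have eq_c : rankC c'' = rankC c' by lia.
by rewrite (rankA_inj eq_a) (rankC_inj eq_c) !eqxx.
Qed.

End BicliqueOrientation.

Section StandardColouring.

Variables (j k : nat) (bG : 'I_j -> 'I_k -> bool).

Definition std_colourings : {set {ffun biclique_vert j k -> 'I_(j + k)}} :=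
  [set f in proper_colourings (biclique_adj bG) (j + k) | [forall c, f (inr c) < k]].

Variable f : {ffun biclique_vert j k -> 'I_(j + k)}.
Hypothesis f_std : f \in std_colourings.

Lemma std_colourC_lt c : f (inr c) < k.
Proof. by case/setIdP: f_std => _ /forallP. Qed.

Lemma std_proper x y : biclique_adj bG x y -> f x != f y.
Proof. by case/setIdP: f_std => /proper_colouringP f_ok _; apply: f_ok. Qed.

Lemma std_colourA_inj : injective (fun a => f (inl a) : nat).
Proof.
move=> a a' /val_inj eq_f; apply/eqP/negPn/negP => neq_a.
by have := @std_proper (inl a) (inl a') neq_a; rewrite eq_f eqxx.
Qed.

Lemma std_colourC_inj : injective (fun c => f (inr c) : nat).
Proof.
move=> c c' /val_inj eq_f; apply/eqP/negPn/negP => neq_c.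
by have := @std_proper (inr c) (inr c') neq_c; rewrite eq_f eqxx.
Qed.

Lemma std_colourC_onto i : i < k -> exists c, f (inr c) = i :> nat.
Proof.
move=> lt_i; have [c _ eq_c] : exists2 c, c \in [set: 'I_k] & f (inr c) = i :> nat.
  apply: (@inj_iota_onto _ [set: 'I_k] (fun c => f (inr c) : nat)).
  - by move=> c c' _ _ /std_colourC_inj.
  - by move=> c _; rewrite cardsT card_ord std_colourC_lt.
  - by rewrite cardsT card_ord.
by exists c.
Qed.

Lemma card_std_colourC_lt c : #|[set c' | f (inr c') < f (inr c)]| = f (inr c).
Proof.
rewrite -[in RHS](@card_inj_iota_lt _ [set: 'I_k] (fun c => f (inr c) : nat)) //.
- by apply: eq_card => c'; rewrite !inE.
- by move=> c1 c2 _ _ /std_colourC_inj.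
- by move=> c' _; rewrite cardsT card_ord std_colourC_lt.
Qed.

Lemma std_partner_nonadj a c : f (inr c) = f (inl a) :> nat -> ~~ bG a c.
Proof.
move=> /val_inj eq_f; apply/negP => bac.
by have := @std_proper (inl a) (inr c) bac; rewrite eq_f eqxx.
Qed.

Definition matched (a : 'I_j) : bool := f (inl a) < k.

(* The default [a] is never used: [free_slot a] is only consulted when [a] is
   unmatched, and then [f (inl a) - k < j]. *)
Definition free_slot (a : 'I_j) : 'I_j := insubd a (f (inl a) - k).

Definition matched_slots : {set 'I_j} := ~: (free_slot @: [set a | ~~ matched a]).

Definition matched_rank (a : 'I_j) : nat :=
  #|[set a' | matched a' && (f (inl a') < f (inl a))]|.

(* The place of [a] in the linear order of the j-clique: unmatched vertices
   keep slot [f a - k], matched ones fill the remaining slots in increasing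
   order of colour. *)
Definition position (a : 'I_j) : 'I_j :=
  if matched a then odflt a [pick w in matched_slots | set_rank matched_slots w == matched_rank a]
  else free_slot a.

Lemma free_slotE a : ~~ matched a -> free_slot a = f (inl a) - k :> nat.
Proof.
by rewrite /matched -leqNgt => le_ka; rewrite val_insubd ltn_subLR // [k + j]addnC ltn_ord.
Qed.

Lemma free_slot_inj : {in [set a | ~~ matched a] &, injective free_slot}.
Proof.
move=> a a'; rewrite !inE => ma ma' /(congr1 (@nat_of_ord _)); rewrite !free_slotE //.
move: ma ma'; rewrite /matched -!leqNgt => le_ka le_ka' eq_f.
by apply: std_colourA_inj; rewrite /= -(subnK le_ka) -(subnK le_ka') eq_f.
Qed.

Lemma matched_slotsP w :
  reflect (forall a, ~~ matched a -> free_slot a != w) (w \in matched_slots).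
Proof.
rewrite inE; apply: (iffP negP) => [w_free a ma | w_matched /imsetP[a]].
  by apply/eqP => eq_w; apply: w_free; rewrite -eq_w imset_f ?inE.
by rewrite inE => ma eq_w; have := w_matched a ma; rewrite eq_w eqxx.
Qed.

Lemma card_matched_slots : #|matched_slots| = #|[set a | matched a]|.
Proof.
apply/eqP; rewrite -(eqn_add2l #|free_slot @: [set a | ~~ matched a]|) cardsC.
rewrite card_in_imset; last exact: free_slot_inj.
rewrite -(cardsC [set a | ~~ matched a]) eqn_add2l; apply/eqP.
by apply: eq_card => a; rewrite !inE negbK.
Qed.

Lemma matched_rank_lt a : matched a -> matched_rank a < #|[set a | matched a]|.
Proof.
move=> ma; apply: proper_card; apply/properP; split.
  by apply/subsetP => a'; rewrite !inE => /andP[].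
by exists a; rewrite !inE ?ltnn ?andbF.
Qed.

Lemma matched_rank_ltn a a' :
  matched a -> f (inl a) < f (inl a') -> matched_rank a < matched_rank a'.
Proof.
move=> ma lt_f; apply: proper_card; apply/properP; split.
  by apply/subsetP => a''; rewrite !inE => /andP[-> /ltn_trans]; apply.
by exists a; rewrite !inE ?ltnn ?andbF // ma lt_f.
Qed.

Lemma position_matched a : matched a ->
  position a \in matched_slots /\ set_rank matched_slots (position a) = matched_rank a.
Proof.
move=> ma; rewrite /position ma; case: pickP => [w /andP[wW /eqP] // | no_w].
have [w wW eq_w] : exists2 w, w \in matched_slots & set_rank matched_slots w = matched_rank a.
  apply: inj_iota_onto; first exact: set_rank_inj.
    exact: set_rank_lt_card.
  by rewrite card_matched_slots matched_rank_lt.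
by have := no_w w; rewrite wW eq_w eqxx.
Qed.

Lemma position_free a : ~~ matched a -> position a = free_slot a.
Proof. by rewrite /position => /negbTE->. Qed.

Lemma position_ltn a a' : matched a -> matched a' ->
  f (inl a) < f (inl a') -> position a < position a'.
Proof.
move=> ma ma' lt_f; have [aW rank_a] := position_matched ma.
have [a'W rank_a'] := position_matched ma'.
rewrite ltnNge; apply/negP => /(set_rank_mono matched_slots).
by rewrite rank_a rank_a' leqNgt matched_rank_ltn.
Qed.

Lemma position_inj : injective position.
Proof.
move=> a a' eq_pos; case ma: (matched a); case ma': (matched a').
- case: (ltngtP (f (inl a)) (f (inl a'))) => [lt_f | lt_f | /std_colourA_inj //].
    by have := position_ltn ma ma' lt_f; rewrite eq_pos ltnn.
  by have := position_ltn ma' ma lt_f; rewrite eq_pos ltnn.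
- have [/matched_slotsP/(_ a' (negbT ma')) free_a' _] := position_matched ma.
  by rewrite eq_pos position_free ?ma' ?eqxx in free_a'.
- have [/matched_slotsP/(_ a (negbT ma)) free_a _] := position_matched ma'.
  by rewrite -eq_pos position_free ?ma ?eqxx in free_a.
- by apply: free_slot_inj; rewrite ?inE ?ma ?ma' // -!position_free ?ma ?ma'.
Qed.

Lemma card_position_lt a : #|[set a' | position a' < position a]| = position a.
Proof.
rewrite -[in RHS](@card_inj_iota_lt _ [set: 'I_j] (fun a => position a : nat)) //.
- by apply: eq_card => a'; rewrite !inE.
- by move=> a1 a2 _ _ /val_inj/position_inj.
- by move=> a' _; rewrite cardsT card_ord ltn_ord.
Qed.

Lemma position_le_colour a a' : matched a -> matched a' ->
  position a' <= position a -> f (inl a') <= f (inl a).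
Proof.
move=> ma ma' le_pos; rewrite leqNgt; apply/negP => /(position_ltn ma ma').
by rewrite ltnNge le_pos.
Qed.

Definition precedes (c : 'I_k) (a : 'I_j) : bool :=
  [exists a', matched a' && (position a' <= position a) && (f (inr c) <= f (inl a'))].

Definition precedes_bound (a : 'I_j) : nat :=
  \max_(a' | matched a' && (position a' <= position a)) (f (inl a')).+1.

Lemma precedesE c a : precedes c a = (f (inr c) < precedes_bound a).
Proof. by rewrite /precedes_bound ltn_bigmax_exists. Qed.

Lemma precedes_bound_mono a a' :
  position a <= position a' -> precedes_bound a <= precedes_bound a'.
Proof.
move=> le_pos; apply/bigmax_leqP => a'' /andP[ma'' le_pos''].
by apply: leq_bigmax_cond; rewrite ma'' (leq_trans le_pos'').
Qed.

Definition orientation_of_colouring : {ffun biclique_vert j k * biclique_vert j k -> bool} :=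
  [ffun p => match p with
   | (inl a, inl a') => position a < position a'
   | (inr c, inr c') => f (inr c) < f (inr c')
   | (inl a, inr c) => ~~ bG a c && ~~ precedes c a
   | (inr c, inl a) => ~~ bG a c && precedes c a
   end].

Local Notation Psi := orientation_of_colouring.

Definition colouring_potential (x : biclique_vert j k) : nat :=
  match x with
  | inl a => (2 * precedes_bound a) * j.+1 + position a
  | inr c => (2 * f (inr c)).+1 * j.+1
  end.

Lemma colouring_potential_lt x y :
  Psi (x, y) -> colouring_potential x < colouring_potential y.
Proof.
rewrite ffunE /colouring_potential; case: x => [a | c]; case: y => [a' | c'].
- move=> lt_pos; have le_bound := precedes_bound_mono (ltnW lt_pos).
  by rewrite -addnS; apply: leq_add lt_pos; rewrite leq_mul2r leq_mul2l le_bound !orbT.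
- rewrite precedesE -leqNgt => /andP[_ le_bound].
  have : precedes_bound a * j.+1 <= f (inr c') * j.+1 by rewrite leq_mul2r le_bound orbT.
  have := ltn_ord (position a); lia.
- rewrite precedesE => /andP[_ lt_bound].
  have : (f (inr c)).+1 * j.+1 <= precedes_bound a' * j.+1 by rewrite leq_mul2r lt_bound orbT.
  lia.
- by move=> lt_f; rewrite ltn_pmul2r ?ltnS ?ltn_pmul2l.
Qed.

Lemma orientation_of_colouring_ao :
  Psi \in acyclic_orientations (biclique_adj (compl_bridges bG)).
Proof.
apply: potential_ao colouring_potential_lt.
- move=> [a | c] [a' | c']; rewrite ffunE /biclique_adj /compl_bridges.
  + by move=> lt_pos; apply: contraTneq lt_pos => ->; rewrite ltnn.
  + by case/andP.
  + by case/andP.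
  + by move=> lt_f; apply: contraTneq lt_f => ->; rewrite ltnn.
- move=> [a | c] [a' | c']; rewrite !ffunE /biclique_adj /compl_bridges.
  + move=> neq_a; have : position a != position a' :> nat.
      by rewrite (inj_eq val_inj) (inj_eq position_inj).
    by case: ltngtP.
  + by case: (bG a c'); case: (precedes c' a).
  + by case: (bG a' c); case: (precedes c a').
  + move=> neq_c; have : f (inr c) != f (inr c') :> nat by rewrite (inj_eq std_colourC_inj).
    by case: ltngtP.
Qed.

Lemma rankA_orientation_of_colouring a : rankA Psi a = position a.
Proof. by rewrite -card_position_lt; apply: eq_card => a'; rewrite !inE ffunE. Qed.

Lemma rankC_orientation_of_colouring c : rankC Psi c = f (inr c).
Proof. by rewrite -card_std_colourC_lt; apply: eq_card => c'; rewrite !inE ffunE. Qed.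

Lemma partner_arc a c : f (inr c) = f (inl a) :> nat -> Psi (inr c, inl a).
Proof.
move=> eq_f; rewrite ffunE std_partner_nonadj //=; apply/existsP; exists a.
by rewrite /matched -eq_f std_colourC_lt leqnn eq_f leqnn.
Qed.

Lemma top_arc_colour a c : top_arc Psi a c -> f (inl a) = f (inr c) :> nat.
Proof.
move=> top_ac; have := top_arc_arc top_ac; rewrite ffunE => /andP[_ /existsP[a'']].
case/andP => /andP[ma'' le_pos] le_f; have [c'' eq_c''] := std_colourC_onto ma''.
have le_rankA : rankA Psi a'' <= rankA Psi a by rewrite !rankA_orientation_of_colouring.
have le_rankC : rankC Psi c <= rankC Psi c''.
  by rewrite !rankC_orientation_of_colouring eq_c''.
by have [<- <-] := top_arc_max top_ac (partner_arc eq_c'') le_rankA le_rankC.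
Qed.

Lemma colour_top_arc a c : f (inl a) = f (inr c) :> nat -> top_arc Psi a c.
Proof.
move=> eq_f; have ma : matched a by rewrite /matched eq_f std_colourC_lt.
rewrite /top_arc partner_arc //=; apply/forallP => a'; apply/forallP => c'; apply/implyP.
rewrite ffunE !rankA_orientation_of_colouring !rankC_orientation_of_colouring.
case/andP => /andP[/andP[_ /existsP[a'' /andP[/andP[ma'' le_pos''] le_f'']]] le_pos'] le_f'.
have eq_a'' : a'' = a.
  apply: std_colourA_inj; apply/eqP; rewrite /= eqn_leq.
  rewrite position_le_colour ?(leq_trans le_pos'') //=.
  by rewrite eq_f (leq_trans le_f').
move: le_pos'' le_f''; rewrite eq_a'' => le_pos'' le_f''.
have -> : a' = a by apply/position_inj/val_inj/eqP; rewrite eqn_leq le_pos' le_pos''.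
have -> : c' = c by apply/std_colourC_inj/eqP; rewrite /= eqn_leq le_f' -eq_f le_f''.
by rewrite !eqxx.
Qed.

End StandardColouring.

Section OrientationToColouring.

Variables (j k : nat) (bG : 'I_j -> 'I_k -> bool) (d : 'I_(j + k)).
Variable o : {ffun biclique_vert j k * biclique_vert j k -> bool}.
Hypothesis o_ao : o \in acyclic_orientations (biclique_adj (compl_bridges bG)).

(* [d] is a junk default: both values below are < j + k. *)
Definition colouring_of_orientation : {ffun biclique_vert j k -> 'I_(j + k)} :=
  [ffun x => insubd d (match x with
    | inl a => if [pick c | top_arc o a c] is Some c then rankC o c else k + rankA o a
    | inr c => rankC o c
    end)].

Local Notation Phi := colouring_of_orientation.

Lemma colouring_of_orientationC c : Phi (inr c) = rankC o c :> nat.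
Proof. by rewrite ffunE val_insubd (leq_trans (rankC_lt o_ao c)) ?leq_addl. Qed.

Lemma colouring_of_orientation_top a c : top_arc o a c -> Phi (inl a) = rankC o c :> nat.
Proof.
move=> top_ac; rewrite ffunE; case: pickP => [c' top_ac' | /(_ c)]; last by rewrite top_ac.
by rewrite val_insubd (top_arc_uniqC top_ac' top_ac) (leq_trans (rankC_lt o_ao c)) ?leq_addl.
Qed.

Variant colouring_of_orientationA_spec (a : 'I_j) : Prop :=
  | ColourTop c of top_arc o a c & Phi (inl a) = rankC o c :> nat
  | ColourFree of (forall c, ~~ top_arc o a c) & Phi (inl a) = k + rankA o a :> nat.

Lemma colouring_of_orientationA a : colouring_of_orientationA_spec a.
Proof.
case: (pickP (top_arc o a)) => [c top_ac | no_top].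
  by apply: (ColourTop top_ac); apply: colouring_of_orientation_top.
have no_top' c : ~~ top_arc o a c by rewrite no_top.
right => //; rewrite ffunE; case: pickP => [c | _]; first by rewrite no_top.
by rewrite val_insubd addnC ltn_add2r (rankA_lt o_ao).
Qed.

Lemma colouring_of_orientation_std : Phi \in std_colourings bG.
Proof.
rewrite inE; apply/andP; split; last first.
  by apply/forallP => c; rewrite colouring_of_orientationC (rankC_lt o_ao).
have rankC_lt_k c a : rankC o c < k + rankA o a by rewrite (leq_trans (rankC_lt o_ao c)) ?leq_addr.
apply/proper_colouringP => x y adj; rewrite -(inj_eq val_inj) /=.
case: x y adj => [a | c] [a' | c'] /= adj.
- case: (colouring_of_orientationA a) => [c top_ac -> | _ ->];
    case: (colouring_of_orientationA a') => [c' top_a'c' -> | _ ->].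
  + apply: contra adj => /eqP/(rankC_inj o_ao) eq_c; rewrite -eq_c in top_a'c'.
    by rewrite (top_arc_uniqA top_ac top_a'c').
  + by rewrite neq_ltn rankC_lt_k.
  + by rewrite neq_ltn rankC_lt_k orbT.
  + by rewrite eqn_add2l (inj_eq (rankA_inj o_ao)).
- rewrite colouring_of_orientationC.
  case: (colouring_of_orientationA a) => [c top_ac -> | _ ->].
    2: by rewrite neq_ltn rankC_lt_k orbT.
  apply: contraL adj => /eqP/(rankC_inj o_ao) eq_c; rewrite eq_c in top_ac.
  exact: (top_arc_nonadj o_ao top_ac).
- rewrite colouring_of_orientationC.
  case: (colouring_of_orientationA a') => [c' top_ac -> | _ ->].
    2: by rewrite neq_ltn rankC_lt_k.
  apply: contraL adj => /eqP/(rankC_inj o_ao) eq_c; rewrite -eq_c in top_ac.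
  exact: (top_arc_nonadj o_ao top_ac).
- by rewrite !colouring_of_orientationC (inj_eq (rankC_inj o_ao)).
Qed.

Let Phi_std := colouring_of_orientation_std.

Lemma matched_colouring_of_orientation a : matched Phi a = [exists c, top_arc o a c].
Proof.
rewrite /matched; case: (colouring_of_orientationA a) => [c top_ac -> | no_top ->].
  by rewrite (rankC_lt o_ao); apply/esym/existsP; exists c.
by rewrite ltnNge leq_addr; apply/esym/existsP => -[c]; rewrite (negbTE (no_top c)).
Qed.

Lemma free_slot_colouring_of_orientation a :
  ~~ matched Phi a -> free_slot Phi a = rankA o a :> nat.
Proof.
move=> ma; rewrite (free_slotE ma).
case: (colouring_of_orientationA a) => [c _ e | _ ->]; last by rewrite addKn.
by move: ma; rewrite /matched e (rankC_lt o_ao).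
Qed.

Lemma colouring_of_orientation_ltE a a' : matched Phi a -> matched Phi a' ->
  (Phi (inl a') < Phi (inl a)) = (rankA o a' < rankA o a).
Proof.
rewrite !matched_colouring_of_orientation => /existsP[c top_ac] /existsP[c' top_a'c'].
rewrite (colouring_of_orientation_top top_ac) (colouring_of_orientation_top top_a'c').
apply/idP/idP => [lt_c | /(top_arc_mono top_a'c' top_ac) //].
case: (ltngtP (rankA o a') (rankA o a)) => // [lt_a | /(rankA_inj o_ao) eq_a].
  by have := top_arc_mono top_ac top_a'c' lt_a; rewrite ltnNge (ltnW lt_c).
by rewrite eq_a in top_a'c'; rewrite (top_arc_uniqC top_ac top_a'c') ltnn in lt_c.
Qed.

Lemma rankA_matched_slot (a0 a : 'I_j) :
  matched Phi a -> insubd a0 (rankA o a) \in matched_slots Phi.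
Proof.
move=> ma; apply/matched_slotsP => a' ma'; rewrite -(inj_eq val_inj) /=.
rewrite free_slot_colouring_of_orientation // val_insubd (rankA_lt o_ao).
by rewrite (inj_eq (rankA_inj o_ao)); apply: contraNneq ma' => ->.
Qed.

Lemma set_rank_rankA a : matched Phi a ->
  set_rank (matched_slots Phi) (insubd a (rankA o a)) = matched_rank Phi a.
Proof.
move=> ma; have val_rankA (a0 a' : 'I_j) : val (insubd a0 (rankA o a')) = rankA o a'.
  by rewrite val_insubd (rankA_lt o_ao).
rewrite /set_rank /matched_rank -(card_in_imset (f := fun a' => insubd a (rankA o a'))).
  apply: eq_card => w; rewrite inE; apply/andP/imsetP => [[wW lt_w] | [a']].
    have [a' eq_w] := rankA_onto o_ao (ltn_ord w).
    have ma' : matched Phi a'.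
      apply/negPn/negP => nma'; move/matched_slotsP/(_ a' nma'): wW.
      by rewrite -(inj_eq val_inj) /= free_slot_colouring_of_orientation // eq_w eqxx.
    exists a'; first by rewrite inE ma' colouring_of_orientation_ltE // eq_w -(val_rankA a a).
    by apply: val_inj; rewrite val_rankA eq_w.
  rewrite inE => /andP[ma' lt_f] ->; split; first exact: rankA_matched_slot.
  by rewrite !val_rankA -colouring_of_orientation_ltE.
by move=> a1 a2 _ _ /(congr1 val); rewrite !val_rankA => /(rankA_inj o_ao).
Qed.

Lemma position_colouring_of_orientation a : position Phi a = rankA o a :> nat.
Proof.
case ma: (matched Phi a); last first.
  by rewrite position_free ?ma // free_slot_colouring_of_orientation ?ma.
have [posW rank_pos] := position_matched Phi_std ma.
have val_slot : val (insubd a (rankA o a)) = rankA o a by rewrite val_insubd (rankA_lt o_ao).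
rewrite -val_slot; congr val; apply: set_rank_inj posW (rankA_matched_slot a ma) _.
by rewrite rank_pos set_rank_rankA.
Qed.

Lemma precedes_colouring_of_orientation a c :
  ~~ bG a c -> precedes Phi c a = o (inr c, inl a).
Proof.
move=> nbac; apply/existsP/idP => [[a'] | oca].
  rewrite position_colouring_of_orientation colouring_of_orientationC.
  case/andP=> /andP[]; rewrite matched_colouring_of_orientation => /existsP[c' top_a'c'].
  rewrite position_colouring_of_orientation (colouring_of_orientation_top top_a'c') => le_a le_c.
  apply/negPn/negP => noca.
  have oac : o (inl a, inr c).
    by move: (ao_edge_xor o_ao (x := inl a) (y := inr c) nbac); rewrite (negbTE noca) addbF.
  have arc := connect1 (e := fun x y => o (x, y)).
  have := ao_no_cycle o_ao oac; rewrite (connect_trans (connect_rankC o_ao le_c)) //.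
  exact: connect_trans (arc _ _ (top_arc_arc top_a'c')) (connect_rankA o_ao le_a).
have [a' [c' [top_a'c' le_a le_c]]] := top_arc_above o_ao oca.
exists a'; rewrite matched_colouring_of_orientation; apply/andP; split.
  by apply/andP; split; [apply/existsP; exists c' | rewrite !position_colouring_of_orientation].
by rewrite colouring_of_orientationC (colouring_of_orientation_top top_a'c').
Qed.

Lemma orientation_of_colouringK : orientation_of_colouring bG Phi = o.
Proof.
apply/ffunP => -[[a | c] [a' | c']]; rewrite ffunE.
- by rewrite !position_colouring_of_orientation (rankA_ltE o_ao).
- have [bac' | nbac'] := boolP (bG a c').
    by apply/esym/negP => /(ao_edge o_ao); rewrite /= /compl_bridges bac'.
  rewrite precedes_colouring_of_orientation //.
  by move: (ao_edge_xor o_ao (x := inl a) (y := inr c') nbac'); case: (o _); case: (o _).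
- have [ba'c | nba'c] := boolP (bG a' c).
    by apply/esym/negP => /(ao_edge o_ao); rewrite /= /compl_bridges ba'c.
  by rewrite precedes_colouring_of_orientation.
- by rewrite !colouring_of_orientationC (rankC_ltE o_ao).
Qed.

End OrientationToColouring.

Lemma colouring_of_orientationK j k (bG : 'I_j -> 'I_k -> bool) (d : 'I_(j + k)) f :
  f \in std_colourings bG -> colouring_of_orientation d (orientation_of_colouring bG f) = f.
Proof.
move=> f_std; apply/ffunP => x; apply: val_inj; rewrite ffunE val_insubd.
case: x => [a | c]; last by rewrite rankC_orientation_of_colouring ?ltn_ord.
case: pickP => [c /(top_arc_colour f_std) eq_f | no_top].
  by rewrite rankC_orientation_of_colouring // -eq_f ltn_ord.
have ma : ~~ matched f a.
  apply/negP => ma; have [c eq_f] := std_colourC_onto f_std ma.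
  by have := no_top c; rewrite colour_top_arc.
rewrite rankA_orientation_of_colouring // position_free // (free_slotE ma) subnKC ?ltn_ord //.
by rewrite leqNgt.
Qed.

Lemma card_ao_std j k (bG : 'I_j -> 'I_k -> bool) (d : 'I_(j + k)) :
  #|acyclic_orientations (biclique_adj (compl_bridges bG))| = #|std_colourings bG|.
Proof.
rewrite -(card_in_imset (f := colouring_of_orientation d)); last first.
  move=> o o' o_ao o'_ao eq_Phi.
  by rewrite -(orientation_of_colouringK d o_ao) eq_Phi orientation_of_colouringK.
apply: eq_card => f; apply/imsetP/idP => [[o o_ao ->] | f_std].
  exact: colouring_of_orientation_std.
exists (orientation_of_colouring bG f); first exact: orientation_of_colouring_ao.
by rewrite colouring_of_orientationK.
Qed.

Lemma card_proper_biclique_image j k (bG : 'I_j -> 'I_k -> bool) n (f : {ffun _ -> 'I_n}) :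
  (forall x y, biclique_adj bG x y -> f x != f y) -> #|f @: [set inr c | c : 'I_k]| = k.
Proof.
move=> f_ok; rewrite card_in_imset; first by rewrite card_imset ?card_ord //; apply: inr_inj.
move=> _ _ /imsetP[c _ ->] /imsetP[c' _ ->] eq_f; apply/eqP/negPn/negP => neq_c.
by have := f_ok (inr c) (inr c'); rewrite eq_f eqxx => /(_ neq_c).
Qed.

Lemma card_proper_biclique j k (bG : 'I_j -> 'I_k -> bool) :
  #|proper_colourings (biclique_adj bG) (j + k)| = 'C(j + k, k) * #|std_colourings bG|.
Proof.
rewrite (@card_colourings_by_image _ _ _ [set inr c | c : 'I_k] k (leq_addl j k)); last first.
  by move=> f /proper_colouringP; apply: card_proper_biclique_image.
congr (_ * _); apply: eq_card => f; rewrite !inE; apply: andb_id2l => f_col.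
have /proper_colouringP f_ok : f \in proper_colourings (biclique_adj bG) (j + k) by rewrite inE.
apply/eqP/forallP => [im_f c | lt_k].
  have : f (inr c) \in f @: [set inr c | c : 'I_k] by do 2 apply: imset_f.
  by rewrite im_f inE.
apply/eqP; rewrite eqEcard (card_proper_biclique_image f_ok) card_ord_lt ?leq_addl // leqnn andbT.
by apply/subsetP => _ /imsetP[_ /imsetP[c _ ->] ->]; rewrite inE lt_k.
Qed.

Local Open Scope ring_scope.

Lemma horner_falling_poly k (x : rat) : (falling_poly k).[x] = \prod_(i < k) (x - i%:R).
Proof.
rewrite /falling_poly horner_prod; apply: eq_bigr => i _.
by rewrite hornerD hornerN hornerX hornerC.
Qed.

Lemma horner_falling_poly_N1 k : (falling_poly k).[-1] = (-1) ^+ k * k`!%:R.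
Proof.
rewrite horner_falling_poly; elim: k => [|k IHk]; first by rewrite big_ord0 expr0 mul1r.
rewrite big_ord_recr /= IHk exprS factS natrM -opprD -natr1 addrC.
by rewrite mulrN mulN1r mulNr -mulrA [_ * (_ + 1)]mulrC mulrA.
Qed.

Lemma horner_falling_reflect j k (g h : {poly rat}) (c : int) :
  g = (-1) ^+ j *: (h \Po ((c%:~R)%:P - 'X)) ->
  (falling_poly k * g).[(c + 1)%:~R] = binz (c + 1) k * (-1) ^+ (j + k) * (falling_poly k * h).[-1].
Proof.
move=> ->; rewrite !hornerM hornerZ horner_comp horner_falling_poly_N1 horner_falling_poly /binz.
rewrite !(hornerD, hornerN, hornerX, hornerC) intrD opprD addNKr exprD.
have nz_fact : k`!%:R != 0 :> rat by rewrite pnatr_eq0 -lt0n fact_gt0.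
rewrite -!mulrA; congr (_ * _); rewrite [_^-1 * _]mulrC -!mulrA; congr (_ * _).
by rewrite mulrA -expr2 sqrr_sign mul1r mulrC divfK.
Qed.

Theorem mainTheorem6 (j k : nat) (hj : (1 <= j)%N) (hjk : (j <= k)%N) :
  (forall (bG bH : 'I_j -> 'I_k -> bool) (PG PH g h : {poly rat}) (c : int),
     is_chromatic_poly (biclique_adj bG) PG ->
     is_chromatic_poly (biclique_adj bH) PH ->
     PG = falling_poly k * g ->
     PH = falling_poly k * h ->
     g = (-1) ^+ j *: (h \Po ((c%:~R)%:P - 'X)) ->
     PG.[(c + 1)%:~R] = binz (c + 1) k * (-1) ^+ (j + k) * PH.[-1])
  /\
  (forall bG : 'I_j -> 'I_k -> bool,
     #|proper_colourings (biclique_adj bG) (j + k)| =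
     ('C(j + k, k) * #|acyclic_orientations (biclique_adj (compl_bridges bG))|)%N).
Proof.
split=> [bG bH PG PH g h c _ _ -> -> | bG]; first exact: horner_falling_reflect.
have d : 'I_(j + k) := Ordinal (leq_trans hj (leq_addr k j)).
by rewrite card_proper_biclique (card_ao_std bG d).
Qed.
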